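(* Let $\mathbb X,\mathbb Y_1,\mathbb Y_2,\mathbb X^\sharp$ be sets, $c:\mathbb X\times\mathbb X^\sharp\to\overline{\mathbb R}$ a coupling, $\phi:\mathbb Y_1\times\mathbb X\times\mathbb Y_2\to\overline{\mathbb R}$, and $g_1:\mathbb Y_1\to\overline{\mathbb R}$, $g_2:\mathbb Y_2\to\overline{\mathbb R}$. Suppose there exist $\Gamma_1:\mathbb X^\sharp\times\mathbb Y_1\to\overline{\mathbb R}$ and $\Gamma_2:\mathbb X^\sharp\times\mathbb Y_2\to\overline{\mathbb R}$ such that $$\sup_{x\in\mathbb X}\big(c(x,x^\sharp)\mathbin{\underset{\cdot}{+}}(-\phi(y_1,x,y_2))\big)=\Gamma_1(x^\sharp,y_1)\mathbin{\underset{\cdot}{+}}\Gamma_2(x^\sharp,y_2)\quad\text{for all }(x^\sharp,y_1,y_2)\in\mathbb X^\sharp\times\mathbb Y_1\times\mathbb Y_2.$$ Then for all $x^\sharp\in\mathbb X^\sharp$, $$(g_1\square^{\phi}g_2)^{c}(x^\sharp)=\sup_{y_1\in\mathbb Y_1}\big(\Gamma_1(x^\sharp,y_1)\mathbin{\underset{\cdot}{+}}(-g_1(y_1))\big)\mathbin{\underset{\cdot}{+}}\sup_{y_2\in\mathbb Y_2}\big(\Gamma_2(x^\sharp,y_2)\mathbin{\underset{\cdot}{+}}(-g_2(y_2))\big).$$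
   Context: $\overline{\mathbb R}=[-\infty,+\infty]$. The Moreau lower addition $\mathbin{\underset{\cdot}{+}}$ is usual addition extended by $(+\infty)\mathbin{\underset{\cdot}{+}}(-\infty)=(-\infty)\mathbin{\underset{\cdot}{+}}(+\infty)=-\infty$; the Moreau upper addition $\mathbin{\overset{\cdot}{+}}$ is usual addition extended by $(+\infty)\mathbin{\overset{\cdot}{+}}(-\infty)=(-\infty)\mathbin{\overset{\cdot}{+}}(+\infty)=+\infty$. The generalized inf-convolution is $(g_1\square^{\phi}g_2)(x)=\inf_{y_1,y_2}\big(g_1(y_1)\mathbin{\overset{\cdot}{+}}\phi(y_1,x,y_2)\mathbin{\overset{\cdot}{+}} g_2(y_2)\big)$, and for $h:\mathbb X\to\overline{\mathbb R}$, $h^{c}(x^\sharp)=\sup_{x}\big(c(x,x^\sharp)\mathbin{\underset{\cdot}{+}}(-h(x))\big)$. *)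

From mathcomp Require Import all_boot all_order all_algebra.
From mathcomp Require Import all_classical all_reals ereal.
Set Implicit Arguments. Unset Strict Implicit. Unset Printing Implicit Defensive.
Import Order.TTheory GRing.Theory Num.Theory.
Local Open Scope classical_set_scope.
Local Open Scope ereal_scope.

(* Moreau lower addition: (+oo) + (-oo) = -oo.  This is mathcomp's [adde]. *)
Definition lower_add {R : realType} (a b : \bar R) : \bar R := adde a b.
(* Moreau upper addition: (+oo) + (-oo) = +oo.  This is mathcomp's [dual_adde]. *)
Definition upper_add {R : realType} (a b : \bar R) : \bar R := dual_adde a b.

Definition gen_infconv {R : realType} {X Y1 Y2 : Type}
  (phi : Y1 -> X -> Y2 -> \bar R) (g1 : Y1 -> \bar R) (g2 : Y2 -> \bar R)
  (x : X) : \bar R :=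
  ereal_inf (range (fun y : Y1 * Y2 =>
    upper_add (upper_add (g1 y.1) (phi y.1 x y.2)) (g2 y.2))).

Definition cconj {R : realType} {X Xs : Type} (c : X -> Xs -> \bar R)
  (h : X -> \bar R) (xs : Xs) : \bar R :=
  ereal_sup (range (fun x : X => lower_add (c x xs) (- h x))).

From mathcomp Require Import all_boot all_order all_algebra.
From mathcomp Require Import all_classical all_reals ereal.
Local Open Scope classical_set_scope.
Local Open Scope ereal_scope.
Import Order.TTheory GRing.Theory Num.Theory.

(* Negating the inf-convolution turns it into a supremum, and the upper
   additions into lower additions of the negated terms.  Since [- g1 y1] and
   [- g2 y2] do not depend on [x], the c-conjugate becomes a supremum over
   [(y1, y2)] of [- g1 y1 - g2 y2] plus the supremum over [x] of
   [c(x, x#) - phi(y1, x, y2)], which the hypothesis splits as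
   [Gamma1 + Gamma2]; the resulting separable supremum is the sum of the two
   suprema. *)

Section ereal_sup_range.
Context {R : realType}.
Implicit Types (I J : Type).

Lemma ereal_sup_range_addl I (a : \bar R) (f : I -> \bar R) :
  ereal_sup (range (fun i => a + f i)) = a + ereal_sup (range f).
Proof.
apply/le_anti/andP; split.
  apply: ge_ereal_sup => _ [i _ <-]; apply: leeD2l.
  by apply: ereal_sup_ubound; exists i.
case: a => [r| |]; last by rewrite addNye leNye.
  rewrite -leeBrDl //; apply: ge_ereal_sup => _ [i _ <-].
  by rewrite leeBrDl //; apply: ereal_sup_ubound; exists i.
case: (pselect (exists i, f i != -oo)) => [[i fi]|Nf].
  by rewrite [X in _ <= X]ereal_supy ?leey //; exists i; rewrite ?addye.
have -> : ereal_sup (range f) = -oo.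
  apply/ereal_sup_ninfty => _ [i _ <-] /=.
  by apply/eqP; apply: contra_notT Nf; exists i.
by rewrite addeNy leNye.
Qed.

Lemma ereal_sup_range_pair I J (F : I -> J -> \bar R) :
  ereal_sup (range (fun p : I * J => F p.1 p.2)) =
  ereal_sup (range (fun i => ereal_sup (range (F i)))).
Proof.
apply/le_anti/andP; split.
  apply: ge_ereal_sup => _ [[i j] _ <-] /=.
  apply: le_ereal_sup_tmp; exists (ereal_sup (range (F i))); first by exists i.
  by apply: ereal_sup_ubound; exists j.
apply: ge_ereal_sup => _ [i _ <-]; apply: ge_ereal_sup => _ [j _ <-].
by apply: ereal_sup_ubound; exists (i, j).
Qed.

Lemma ereal_sup_range_comm I J (F : I -> J -> \bar R) :
  ereal_sup (range (fun i => ereal_sup (range (F i)))) =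
  ereal_sup (range (fun j => ereal_sup (range (F^~ j)))).
Proof.
rewrite -!ereal_sup_range_pair; congr ereal_sup.
by rewrite eqEsubset; split=> _ [[i j] _ <-]; exists (j, i).
Qed.

Lemma ereal_sup_range_addD I J (f : I -> \bar R) (g : J -> \bar R) :
  ereal_sup (range (fun p : I * J => f p.1 + g p.2)) =
  ereal_sup (range f) + ereal_sup (range g).
Proof.
rewrite (ereal_sup_range_pair _ _ (fun i j => f i + g j)).
under eq_fun do rewrite ereal_sup_range_addl addeC.
by rewrite ereal_sup_range_addl addeC.
Qed.

Lemma oppe_ereal_inf_range I (f : I -> \bar R) :
  - ereal_inf (range f) = ereal_sup (range (fun i => - f i)).
Proof. by rewrite /ereal_inf oppeK image_comp. Qed.

End ereal_sup_range.

Lemma oppe_dual_adde {R : numDomainType} (x y : \bar R) :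
  - (x + y)%dE = - x + - y.
Proof. by rewrite DualAddTheoryNumDomain.dual_addeE oppeK. Qed.

Lemma cconj_gen_infconv {R : realType} (X Y1 Y2 Xs : Type)
    (c : X -> Xs -> \bar R) (phi : Y1 -> X -> Y2 -> \bar R)
    (g1 : Y1 -> \bar R) (g2 : Y2 -> \bar R) (xs : Xs) :
  cconj c (gen_infconv phi g1 g2) xs =
  ereal_sup (range (fun y : Y1 * Y2 =>
    - g1 y.1 + - g2 y.2 + cconj c (phi y.1 ^~ y.2) xs)).
Proof.
(* [lower_add] and [upper_add] unfold to the raw [adde] and [dual_adde], while
   the library lemmas are stated for [+%E] and [+%dE]: fold them back. *)
rewrite /cconj /gen_infconv /lower_add /upper_add -[adde]/+%E -[dual_adde]/+%dE.
under eq_fun => x.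
  rewrite oppe_ereal_inf_range -ereal_sup_range_addl.
  under eq_fun do rewrite !oppe_dual_adde (addeAC (- g1 _)) addeCA.
  over.
rewrite (ereal_sup_range_comm _ _
  (fun x (y : Y1 * Y2) => - g1 y.1 + - g2 y.2 + (c x xs + - phi y.1 x y.2))).
by under eq_fun do rewrite ereal_sup_range_addl.
Qed.

Theorem proposition3 (R : realType) (X Y1 Y2 Xs : Type)
  (c : X -> Xs -> \bar R) (phi : Y1 -> X -> Y2 -> \bar R)
  (g1 : Y1 -> \bar R) (g2 : Y2 -> \bar R)
  (Gamma1 : Xs -> Y1 -> \bar R) (Gamma2 : Xs -> Y2 -> \bar R) :
  (forall (xs : Xs) (y1 : Y1) (y2 : Y2),
     ereal_sup (range (fun x : X => lower_add (c x xs) (- phi y1 x y2)))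
     = lower_add (Gamma1 xs y1) (Gamma2 xs y2)) ->
  forall xs : Xs,
    cconj c (gen_infconv phi g1 g2) xs
    = lower_add
        (ereal_sup (range (fun y1 : Y1 => lower_add (Gamma1 xs y1) (- g1 y1))))
        (ereal_sup (range (fun y2 : Y2 => lower_add (Gamma2 xs y2) (- g2 y2)))).
Proof.
move=> split_sup xs.
have split_cconj y1 y2 :
  cconj c (phi y1 ^~ y2) xs = Gamma1 xs y1 + Gamma2 xs y2 := split_sup xs y1 y2.
rewrite cconj_gen_infconv /lower_add -[adde]/+%E -ereal_sup_range_addD.
by under eq_fun do rewrite split_cconj addeACA [- g1 _ + _]addeC [- g2 _ + _]addeC.
Qed.
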